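(* Let $v$ satisfy the standing assumptions and the doubling condition. Let $f(z)=\sum_k a_{n_k}z^{n_k}$ be a holomorphic function in $\mathbb{D}$ given by a Hadamard gap series ($n_k$ positive integers, $n_{k+1}\ge\lambda n_k$, $\lambda>1$). If $\operatorname{Re}f\in k^\infty_v$, then $\operatorname{Re}f\in h^\infty_v$ and $\operatorname{Im}f\in h^\infty_v$.
   Context: Standing assumptions: $v:[0,1)\to[1,\infty)$ is positive, increasing, continuous, $v(0)=1$, $\lim_{r\to1}v(r)=+\infty$. Doubling condition: there is $D\ge1$ with $v(1-d)\le D\,v(1-2d)$ for all $d\in(0,1/2]$. $k^\infty_v$ is the set of real harmonic $u$ on $\mathbb{D}$ with $u(z)\le Kv(|z|)$ for some $K>0$; $h^\infty_v$ is the set of real harmonic $u$ on $\mathbb{D}$ with $|u(z)|\le Kv(|z|)$ for some $K>0$. *)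

From Stdlib Require Import Reals.
Open Scope R_scope.

Definition Cpx := (R * R)%type.
Definition Cmul (z w : Cpx) : Cpx :=
  (fst z * fst w - snd z * snd w, fst z * snd w + snd z * fst w).
Fixpoint Cpow (z : Cpx) (n : nat) : Cpx :=
  match n with O => (1, 0) | S m => Cmul z (Cpow z m) end.
Definition Cmod (z : Cpx) : R := sqrt (fst z * fst z + snd z * snd z).
Definition in_disc (z : Cpx) : Prop := Cmod z < 1.

Definition gap_partial (c : nat -> Cpx) (n : nat -> nat) (z : Cpx) (N : nat) : Cpx :=
  (sum_f_R0 (fun k => fst (Cmul (c k) (Cpow z (n k)))) N,
   sum_f_R0 (fun k => snd (Cmul (c k) (Cpow z (n k)))) N).

Definition hadamard_gap (n : nat -> nat) (lam : R) : Prop :=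
  1 < lam /\ (forall k, (1 <= n k)%nat) /\ (forall k, INR (n (S k)) >= lam * INR (n k)).

Definition weight (v : R -> R) : Prop :=
  v 0 = 1 /\
  (forall r, 0 <= r < 1 -> 1 <= v r) /\
  (forall r s, 0 <= r -> r <= s -> s < 1 -> v r <= v s) /\
  (forall r, 0 <= r < 1 -> limit1_in v (fun x => 0 <= x < 1) (v r) r) /\
  (forall M, exists delta, 0 < delta /\ forall r, 1 - delta < r < 1 -> M < v r).

Definition doubling (v : R -> R) : Prop :=
  exists D, 1 <= D /\ forall d, 0 < d <= 1/2 -> v (1 - d) <= D * v (1 - 2 * d).

(* k^infty_v and h^infty_v membership (harmonicity of Re f, Im f is automatic
   here since they are real/imaginary parts of a holomorphic function). *)
Definition in_k_v (v : R -> R) (u : Cpx -> R) : Prop :=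
  exists K, 0 < K /\ forall z, in_disc z -> u z <= K * v (Cmod z).
Definition in_h_v (v : R -> R) (u : Cpx -> R) : Prop :=
  exists K, 0 < K /\ forall z, in_disc z -> Rabs (u z) <= K * v (Cmod z).

(* On such a circle
   Re f(r e^{it}) = sum_k (al_k cos (n_k t) - be_k sin (n_k t)) <= B.  Split the
   indices into the residue classes modulo q, with lam^q large: the frequencies of
   one class are then dissociated, so the Riesz product
   W(t) = prod (1 + cos (n_k t + psi)) over the class is nonnegative, has mean 1,
   and has Fourier coefficient 1/2 at every n_k of the class and 0 at every other
   n_k.  Averaging Re f * W gives
   sum over the class of (al_k cos psi + be_k sin psi) <= 2B, and summing the
   q classes yields cos psi Re f + sin psi Im f <= 2qB; psi = 0, pi, +-pi/2 give
   both two-sided bounds.  The means are taken over M equally spaced points,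
   where orthogonality is exact below frequency M; the aliased higher terms are
   absorbed by the geometric decay of the coefficients inside the disc. *)

From Stdlib Require Import Reals Lra Lia ZArith.
Open Scope R_scope.

Fixpoint sum_below (g : nat -> R) (M : nat) : R :=
  match M with O => 0 | S m => sum_below g m + g m end.

Lemma sum_below_plus g h M :
  sum_below (fun j => g j + h j) M = sum_below g M + sum_below h M.
Proof. induction M as [|M IH]; simpl; [lra | rewrite IH; lra]. Qed.

Lemma sum_below_scal a g M : sum_below (fun j => a * g j) M = a * sum_below g M.
Proof. induction M as [|M IH]; simpl; [lra | rewrite IH; lra]. Qed.

Lemma sum_below_le g h M :
  (forall j, (j < M)%nat -> g j <= h j) -> sum_below g M <= sum_below h M.
Proof.
  induction M as [|M IH]; simpl; intros H; [lra|].
  assert (g M <= h M) by (apply H; lia).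
  assert (sum_below g M <= sum_below h M) by (apply IH; intros; apply H; lia).
  lra.
Qed.

Lemma sum_below_ext g h M :
  (forall j, (j < M)%nat -> g j = h j) -> sum_below g M = sum_below h M.
Proof.
  induction M as [|M IH]; simpl; intros H; [lra|].
  rewrite (H M), IH; [reflexivity | intros; apply H |]; lia.
Qed.

Lemma sum_below_const a M : sum_below (fun _ => a) M = INR M * a.
Proof. induction M as [|M IH]; simpl sum_below; [simpl; lra | rewrite IH, S_INR; lra]. Qed.

Lemma sum_below_telescope f M : sum_below (fun j => f (S j) - f j) M = f M - f O.
Proof. induction M as [|M IH]; simpl; [lra | rewrite IH; lra]. Qed.

Lemma sum_f_R0_sum_below f N : sum_f_R0 f N = sum_below f (S N).
Proof. induction N as [|N IH]; simpl in *; [|rewrite IH]; lra. Qed.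

Lemma sum_below_stable f N M :
  (forall j, (N <= j)%nat -> f j = 0) -> (N <= M)%nat -> sum_below f M = sum_below f N.
Proof.
  intros Hf HNM; induction HNM as [|M HNM IH]; [reflexivity|].
  simpl; rewrite IH, Hf by exact HNM; ring.
Qed.

Lemma sum_f_R0_sum_below_comm (f : nat -> nat -> R) M N :
  sum_f_R0 (fun k => sum_below (fun j => f j k) M) N
  = sum_below (fun j => sum_f_R0 (fun k => f j k) N) M.
Proof.
  induction M as [|M IH]; simpl.
  - induction N as [|N IHN]; simpl in *; [|rewrite IHN]; lra.
  - rewrite sum_plus, IH; reflexivity.
Qed.

Lemma sum_below_cv (g : nat -> nat -> R) (l : nat -> R) M :
  (forall j, (j < M)%nat -> Un_cv (g j) (l j)) ->
  Un_cv (fun N => sum_below (fun j => g j N) M) (sum_below l M).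
Proof.
  induction M as [|M IH]; intros H; simpl.
  - intros e He; exists O; intros; unfold Rdist; rewrite Rminus_0_r, Rabs_R0; lra.
  - apply CV_plus; [apply IH; intros|]; apply H; lia.
Qed.

Lemma Un_cv_const a : Un_cv (fun _ => a) a.
Proof. intros e He; exists O; intros; unfold Rdist; rewrite Rminus_diag, Rabs_R0; lra. Qed.

Lemma sum_f_R0_scal a (f : nat -> R) N :
  sum_f_R0 (fun k => a * f k) N = a * sum_f_R0 f N.
Proof. rewrite scal_sum; apply sum_eq; intros; ring. Qed.

Definition expi (t : R) : Cpx := (cos t, sin t).

Lemma Cmul_assoc a b d : Cmul a (Cmul b d) = Cmul (Cmul a b) d.
Proof. destruct a, b, d; unfold Cmul; simpl; f_equal; ring. Qed.

Lemma Cpow_Cmul z w n : Cpow (Cmul z w) n = Cmul (Cpow z n) (Cpow w n).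
Proof.
  induction n as [|n IH]; simpl; [unfold Cmul; simpl; f_equal; ring|].
  rewrite IH; destruct (Cpow z n), (Cpow w n), z, w; unfold Cmul; simpl; f_equal; ring.
Qed.

Lemma Cpow_expi t n : Cpow (expi t) n = expi (INR n * t).
Proof.
  induction n as [|n IH]; simpl Cpow.
  - unfold expi; simpl; rewrite Rmult_0_l, cos_0, sin_0; reflexivity.
  - rewrite IH, S_INR; unfold expi, Cmul; simpl.
    replace ((INR n + 1) * t) with (t + INR n * t) by ring.
    rewrite cos_plus, sin_plus; f_equal; ring.
Qed.

Lemma Cpow_real x n : Cpow (x, 0) n = (x ^ n, 0).
Proof. induction n as [|n IH]; simpl; [|rewrite IH; unfold Cmul; simpl; f_equal]; ring || reflexivity. Qed.

Lemma Cmod_Cmul z w : Cmod (Cmul z w) = Cmod z * Cmod w.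
Proof.
  destruct z as [a b], w as [c d]; unfold Cmod, Cmul; simpl.
  rewrite <- sqrt_mult by nra; f_equal; ring.
Qed.

Lemma Cmod_expi t : Cmod (expi t) = 1.
Proof.
  unfold Cmod, expi; simpl; rewrite <- sqrt_1; f_equal.
  pose proof (sin2_cos2 t); unfold Rsqr in *; lra.
Qed.

Lemma Cmod_Cpow z n : Cmod (Cpow z n) = Cmod z ^ n.
Proof.
  induction n as [|n IH]; simpl; [|rewrite Cmod_Cmul, IH; reflexivity].
  unfold Cmod; simpl; replace (1 * 1 + 0 * 0) with 1 by ring; apply sqrt_1.
Qed.

Lemma Cmod_ge0 z : 0 <= Cmod z.
Proof. apply sqrt_pos. Qed.

Lemma Rabs_fst_le_Cmod z : Rabs (fst z) <= Cmod z.
Proof.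
  destruct z as [a b]; unfold Cmod; simpl; rewrite <- sqrt_Rsqr_abs.
  apply sqrt_le_1_alt; unfold Rsqr; nra.
Qed.

Lemma Rabs_snd_le_Cmod z : Rabs (snd z) <= Cmod z.
Proof.
  destruct z as [a b]; unfold Cmod; simpl; rewrite <- sqrt_Rsqr_abs.
  apply sqrt_le_1_alt; unfold Rsqr; nra.
Qed.

Lemma fst_Cmul_Cpow_rotate c z t n :
  fst (Cmul c (Cpow (Cmul z (expi t)) n))
  = fst (Cmul c (Cpow z n)) * cos (INR n * t) - snd (Cmul c (Cpow z n)) * sin (INR n * t).
Proof.
  rewrite Cpow_Cmul, Cpow_expi, Cmul_assoc.
  destruct (Cmul c (Cpow z n)); unfold Cmul, expi; simpl; ring.
Qed.

Lemma sin_add_2PI_mul y (m : Z) : sin (y + 2 * IZR m * PI) = sin y.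
Proof.
  assert (Hs : sin (IZR m * PI) = 0) by (apply sin_eq_0_1; exists m; reflexivity).
  replace (2 * IZR m * PI) with (2 * (IZR m * PI)) by ring.
  rewrite sin_plus, sin_2a, cos_2a_sin, Hs; ring.
Qed.

Lemma sin_PI_frac_neq0 (m : Z) (M : nat) :
  (0 < Z.abs m < Z.of_nat M)%Z -> sin (PI * IZR m / INR M) <> 0.
Proof.
  intros Hm Hs; apply sin_eq_0_0 in Hs as [k Hk].
  assert (HM : INR M <> 0) by (rewrite INR_IZR_INZ; apply not_0_IZR; lia).
  assert (Hmk : IZR m = IZR k * INR M).
  { apply (Rmult_eq_reg_l PI); [|pose proof PI_RGT_0; lra].
    replace (PI * IZR m) with (PI * IZR m / INR M * INR M) by (field; exact HM).
    rewrite Hk; ring. }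
  rewrite INR_IZR_INZ, <- mult_IZR in Hmk; apply eq_IZR in Hmk.
  rewrite Hmk, Z.abs_mul, (Z.abs_eq (Z.of_nat M)) in Hm by lia.
  destruct (Z.eq_dec (Z.abs k) 0) as [E|E]; [rewrite E in Hm; lia|].
  pose proof (Z.abs_nonneg k); nia.
Qed.

Lemma sum_below_cos_roots (m : Z) (M : nat) g :
  (0 < Z.abs m < Z.of_nat M)%Z ->
  sum_below (fun j => cos (IZR m * (2 * PI * INR j / INR M) + g)) M = 0.
Proof.
  intros Hm.
  assert (HM : 0 < INR M) by (rewrite INR_IZR_INZ; apply IZR_lt; lia).
  set (h := PI * IZR m / INR M).
  pose proof (sin_PI_frac_neq0 m M Hm) as Hh; fold h in Hh.
  set (f := fun j => sin (g - h + INR j * (2 * h))).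
  (* product-to-sum: [2 sin h cos x = sin (x + h) - sin (x - h)] telescopes *)
  assert (Hstep : forall j, cos (IZR m * (2 * PI * INR j / INR M) + g)
                            = / (2 * sin h) * (f (S j) - f j)).
  { intros j; unfold f; rewrite form4, S_INR.
    replace ((g - h + (INR j + 1) * (2 * h) + (g - h + INR j * (2 * h))) / 2)
      with (IZR m * (2 * PI * INR j / INR M) + g) by (unfold h; field; lra).
    replace ((g - h + (INR j + 1) * (2 * h) - (g - h + INR j * (2 * h))) / 2)
      with h by field.
    field; exact Hh. }
  rewrite (sum_below_ext _ _ _ (fun j _ => Hstep j)), sum_below_scal, sum_below_telescope.
  unfold f; replace (g - h + INR M * (2 * h)) with (g - h + INR 0 * (2 * h) + 2 * IZR m * PI)
    by (unfold h; simpl; field; lra).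
  rewrite sin_add_2PI_mul; ring.
Qed.

Definition circle_mean (M : nat) (g : R -> R) : R :=
  sum_below (fun j => g (2 * PI * INR j / INR M)) M / INR M.

Lemma circle_mean_plus M f g :
  circle_mean M (fun t => f t + g t) = circle_mean M f + circle_mean M g.
Proof. unfold circle_mean; rewrite sum_below_plus; unfold Rdiv; ring. Qed.

Lemma circle_mean_scal M a f : circle_mean M (fun t => a * f t) = a * circle_mean M f.
Proof. unfold circle_mean; rewrite sum_below_scal; unfold Rdiv; ring. Qed.

Lemma circle_mean_ext M f g : (forall t, f t = g t) -> circle_mean M f = circle_mean M g.
Proof. intros H; unfold circle_mean; f_equal; apply sum_below_ext; auto. Qed.

Lemma circle_mean_le M f g :
  (0 < M)%nat -> (forall t, f t <= g t) -> circle_mean M f <= circle_mean M g.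
Proof.
  intros HM H; unfold circle_mean, Rdiv; apply Rmult_le_compat_r.
  - apply Rlt_le, Rinv_0_lt_compat, lt_0_INR; exact HM.
  - apply sum_below_le; auto.
Qed.

Lemma circle_mean_const M a : (0 < M)%nat -> circle_mean M (fun _ => a) = a.
Proof.
  intros HM; unfold circle_mean; rewrite sum_below_const.
  field; apply not_0_INR; lia.
Qed.

Lemma circle_mean_cos M (m : Z) g :
  (0 < Z.abs m < Z.of_nat M)%Z -> circle_mean M (fun t => cos (IZR m * t + g)) = 0.
Proof. intros H; unfold circle_mean; rewrite sum_below_cos_roots by exact H; unfold Rdiv; ring. Qed.

Lemma circle_mean_sum M (f : nat -> R -> R) N :
  sum_f_R0 (fun k => circle_mean M (f k)) N
  = circle_mean M (fun t => sum_f_R0 (fun k => f k t) N).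
Proof.
  unfold circle_mean, Rdiv; rewrite <- scal_sum.
  rewrite (sum_f_R0_sum_below_comm (fun j k => f k (2 * PI * INR j * / INR M))); ring.
Qed.

Lemma circle_mean_cv M (h : nat -> R -> R) l :
  (forall t, Un_cv (fun N => h N t) (l t)) ->
  Un_cv (fun N => circle_mean M (h N)) (circle_mean M l).
Proof.
  intros H; unfold circle_mean, Rdiv; apply CV_mult; [|apply Un_cv_const].
  apply (sum_below_cv (fun j N => h N (2 * PI * INR j * / INR M))); auto.
Qed.

Section RieszProduct.

Variables (n : nat -> nat) (sel : nat -> bool) (psi : R).

(* [riesz N] is a trigonometric polynomial with spectrum in [-budget N, budget N]. *)
Fixpoint budget (N : nat) : nat :=
  match N with O => O | S k => (budget k + if sel k then n k else O)%nat end.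

Fixpoint riesz (N : nat) (t : R) : R :=
  match N with
  | O => 1
  | S k => riesz k t * (if sel k then 1 + cos (INR (n k) * t + psi) else 1)
  end.

Definition riesz_coef (M N : nat) (m : Z) (g : R) : R :=
  circle_mean M (fun t => cos (IZR m * t + g) * riesz N t).

Lemma riesz_bounds N t : 0 <= riesz N t <= 2 ^ N.
Proof.
  induction N as [|N IH]; simpl; [lra|].
  pose proof (COS_bound (INR (n N) * t + psi)); destruct (sel N); nra.
Qed.

Lemma budget_ge N k : sel k = true -> (k < N)%nat -> (n k <= budget N)%nat.
Proof.
  intros Hs; induction N as [|N IH]; intros H; [lia|]; simpl.
  destruct (Nat.eq_dec k N) as [->|].
  - rewrite Hs; lia.
  - specialize (IH ltac:(lia)); destruct (sel N); lia.
Qed.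

Lemma riesz_coef_S_sel M N m g : sel N = true ->
  riesz_coef M (S N) m g
  = riesz_coef M N m g + /2 * riesz_coef M N (m + Z.of_nat (n N)) (g + psi)
    + /2 * riesz_coef M N (m - Z.of_nat (n N)) (g - psi).
Proof.
  intros Hs; unfold riesz_coef; rewrite <- !circle_mean_scal, <- !circle_mean_plus.
  apply circle_mean_ext; intros t; simpl riesz; rewrite Hs.
  rewrite plus_IZR, minus_IZR, <- INR_IZR_INZ.
  set (a := IZR m * t + g); set (b := INR (n N) * t + psi).
  replace ((IZR m + INR (n N)) * t + (g + psi)) with (a + b) by (unfold a, b; ring).
  replace ((IZR m - INR (n N)) * t + (g - psi)) with (a - b) by (unfold a, b; ring).
  rewrite cos_plus, cos_minus; field.
Qed.

Lemma riesz_coef_S_unsel M N m g : sel N = false ->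
  riesz_coef M (S N) m g = riesz_coef M N m g.
Proof. intros Hs; apply circle_mean_ext; intros t; simpl riesz; rewrite Hs; ring. Qed.

Lemma riesz_coef_high M N : forall m g,
  (Z.of_nat (budget N) < Z.abs m)%Z -> (Z.abs m + Z.of_nat (budget N) < Z.of_nat M)%Z ->
  riesz_coef M N m g = 0.
Proof.
  induction N as [|N IH]; intros m g H1 H2.
  - unfold riesz_coef; simpl riesz.
    rewrite (circle_mean_ext _ _ (fun t => cos (IZR m * t + g))) by (intros; ring).
    apply circle_mean_cos; simpl in *; lia.
  - simpl budget in *; destruct (sel N) eqn:E.
    + rewrite riesz_coef_S_sel, !IH by (exact E || lia); ring.
    + rewrite riesz_coef_S_unsel by exact E; apply IH; lia.
Qed.

Hypothesis budget_dominated : forall N, sel N = true -> (2 * budget N < n N)%nat.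

Lemma riesz_coef_0 M N g : (budget N < M)%nat -> riesz_coef M N 0 g = cos g.
Proof.
  revert g; induction N as [|N IH]; intros g H.
  - unfold riesz_coef; simpl riesz.
    rewrite (circle_mean_ext _ _ (fun _ => cos g)) by (intros; rewrite Rmult_0_l, Rplus_0_l; ring).
    apply circle_mean_const; lia.
  - simpl budget in *; destruct (sel N) eqn:E.
    + pose proof (budget_dominated N E).
      rewrite riesz_coef_S_sel, IH, !riesz_coef_high by (exact E || lia); ring.
    + rewrite riesz_coef_S_unsel by exact E; apply IH; lia.
Qed.

Lemma riesz_coef_selected M N k g :
  sel k = true -> (k < N)%nat -> (n k + budget N < M)%nat ->
  riesz_coef M N (Z.of_nat (n k)) g = /2 * cos (g - psi).
Proof.
  revert k g; induction N as [|N IH]; intros k g Hs Hk HM; [lia|].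
  simpl budget in *; destruct (sel N) eqn:E.
  - pose proof (budget_dominated N E); rewrite riesz_coef_S_sel by exact E.
    destruct (Nat.eq_dec k N) as [->|].
    + rewrite Z.sub_diag, riesz_coef_0, !riesz_coef_high by lia; ring.
    + assert (n k <= budget N)%nat by (apply budget_ge; auto; lia).
      rewrite IH, !riesz_coef_high by (auto; lia); ring.
  - assert (k <> N) by (intros ->; congruence).
    rewrite riesz_coef_S_unsel by exact E; apply IH; auto; lia.
Qed.

Hypothesis n_pos : forall k, (1 <= n k)%nat.
Hypothesis budget_separated : forall N k, sel N = true -> k <> N ->
  (Z.of_nat (budget N) < Z.abs (Z.of_nat (n k) - Z.of_nat (n N)))%Z.

Lemma riesz_coef_unselected M N k g :
  ~ (sel k = true /\ (k < N)%nat) -> (n k + budget N < M)%nat ->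
  riesz_coef M N (Z.of_nat (n k)) g = 0.
Proof.
  revert k g; induction N as [|N IH]; intros k g Hk HM.
  - unfold riesz_coef; simpl riesz.
    rewrite (circle_mean_ext _ _ (fun t => cos (IZR (Z.of_nat (n k)) * t + g))) by (intros; ring).
    apply circle_mean_cos; pose proof (n_pos k); simpl in *; lia.
  - simpl budget in *; destruct (sel N) eqn:E.
    + assert (k <> N) by (intros ->; apply Hk; split; [exact E | lia]).
      pose proof (budget_separated N k E H); pose proof (budget_dominated N E).
      rewrite riesz_coef_S_sel, IH, !riesz_coef_high by
        (exact E || lia || (intros [? ?]; apply Hk; split; auto; lia)); ring.
    + rewrite riesz_coef_S_unsel by exact E; apply IH; [|lia].
      intros [? ?]; apply Hk; split; auto; lia.
Qed.

End RieszProduct.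

Lemma Rabs_cos_sin_comb_le a b x y : Rabs (a * cos x - b * sin y) <= Rabs a + Rabs b.
Proof.
  unfold Rminus; eapply Rle_trans; [apply Rabs_triang|]; rewrite Rabs_Ropp, !Rabs_mult.
  assert (Rabs (cos x) <= 1) by (apply Rabs_le, COS_bound).
  assert (Rabs (sin y) <= 1) by (apply Rabs_le, SIN_bound).
  pose proof (Rabs_pos a); pose proof (Rabs_pos b); nra.
Qed.

Definition small_tails (a : nat -> R) : Prop :=
  forall eps, 0 < eps -> exists K0, forall N,
    sum_f_R0 (fun k => if (K0 <=? k)%nat then a k else 0) N <= eps.

Definition trig_term (n : nat -> nat) (al be : nat -> R) (k : nat) (t : R) : R :=
  al k * cos (INR (n k) * t) - be k * sin (INR (n k) * t).

Section RieszBound.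

Variables (n : nat -> nat) (sel : nat -> bool) (psi : R) (al be : nat -> R).

Let term := trig_term n al be.
Let W := riesz n sel psi.

Hypothesis n_pos : forall k, (1 <= n k)%nat.
Hypothesis n_increasing : forall k k', (k < k')%nat -> (n k < n k')%nat.
Hypothesis budget_dominated : forall N, sel N = true -> (2 * budget n sel N < n N)%nat.
Hypothesis budget_separated : forall N k, sel N = true -> k <> N ->
  (Z.of_nat (budget n sel N) < Z.abs (Z.of_nat (n k) - Z.of_nat (n N)))%Z.

Lemma circle_mean_term_riesz M N k :
  circle_mean M (fun t => term k t * W N t)
  = al k * riesz_coef n sel psi M N (Z.of_nat (n k)) 0
    + be k * riesz_coef n sel psi M N (Z.of_nat (n k)) (PI / 2).
Proof.
  unfold riesz_coef; rewrite <- !circle_mean_scal, <- circle_mean_plus.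
  apply circle_mean_ext; intros t; unfold term, trig_term, W.
  rewrite <- INR_IZR_INZ, Rplus_0_r, cos_plus, cos_PI2, sin_PI2; ring.
Qed.

Lemma circle_mean_term_riesz_low M N k :
  (n k + budget n sel N < M)%nat ->
  circle_mean M (fun t => term k t * W N t)
  = if (sel k && (k <? N))%bool then /2 * (al k * cos psi + be k * sin psi) else 0.
Proof.
  intros HM; rewrite circle_mean_term_riesz.
  destruct (sel k && (k <? N))%bool eqn:E.
  - apply andb_prop in E as [Es Ek]; apply Nat.ltb_lt in Ek.
    rewrite !riesz_coef_selected by auto.
    rewrite Rminus_0_l, cos_neg, cos_shift; ring.
  - rewrite !riesz_coef_unselected; auto; try ring;
      intros [Es Ek]; apply Nat.ltb_lt in Ek; rewrite Es, Ek in E; discriminate.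
Qed.

Lemma circle_mean_term_riesz_ge M N k : (0 < M)%nat ->
  - (2 ^ N * (Rabs (al k) + Rabs (be k))) <= circle_mean M (fun t => term k t * W N t).
Proof.
  intros HM; rewrite <- (circle_mean_const M (- (2 ^ N * (Rabs (al k) + Rabs (be k))))) by exact HM.
  apply circle_mean_le; [exact HM|]; intros t.
  pose proof (riesz_bounds n sel psi N t) as HW; fold W in HW.
  pose proof (Rabs_cos_sin_comb_le (al k) (be k) (INR (n k) * t) (INR (n k) * t)) as Hx.
  change (al k * cos _ - be k * sin _) with (term k t) in Hx.
  pose proof (Rle_abs (- term k t)) as Hn; rewrite Rabs_Ropp in Hn.
  pose proof (Rabs_pos (term k t)); nra.
Qed.

Lemma circle_mean_term_riesz_ge_tail M N K0 k :
  (n K0 + 2 * budget n sel N < M)%nat ->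
  /2 * (if (sel k && (k <? N))%bool then al k * cos psi + be k * sin psi else 0)
  - 2 ^ N * (if (K0 <=? k)%nat then Rabs (al k) + Rabs (be k) else 0)
  <= circle_mean M (fun t => term k t * W N t).
Proof.
  intros HM; pose proof (Rabs_pos (al k)); pose proof (Rabs_pos (be k)).
  pose proof (pow_le 2 N ltac:(lra)).
  destruct (lt_dec (n k + budget n sel N) M) as [Hlow|Hhigh].
  - rewrite circle_mean_term_riesz_low by exact Hlow.
    destruct (sel k && (k <? N))%bool, (K0 <=? k)%nat; nra.
  - assert (HkK : (K0 < k)%nat).
    { destruct (le_lt_dec k K0) as [HkK|]; [|assumption]; exfalso.
      destruct (Nat.eq_dec k K0) as [->|]; [lia|].
      pose proof (n_increasing k K0 ltac:(lia)); lia. }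
    rewrite (proj2 (Nat.leb_le K0 k)) by lia.
    destruct (sel k && (k <? N))%bool eqn:Ek.
    + apply andb_prop in Ek as [Es Ek]; apply Nat.ltb_lt in Ek.
      pose proof (budget_ge n sel N k Es Ek); lia.
    + pose proof (circle_mean_term_riesz_ge M N k ltac:(lia)); lra.
Qed.

Variables (u : R -> R) (B : R).
Hypothesis series_cv : forall t, Un_cv (fun K => sum_f_R0 (fun k => term k t) K) (u t).
Hypothesis u_le : forall t, u t <= B.

Lemma circle_mean_riesz_le M N :
  (budget n sel N < M)%nat -> circle_mean M (fun t => u t * W N t) <= B.
Proof.
  intros HM; apply Rle_trans with (circle_mean M (fun t => B * W N t)).
  - apply circle_mean_le; [lia|]; intros t.
    apply Rmult_le_compat_r; [apply riesz_bounds | apply u_le].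
  - rewrite circle_mean_scal.
    replace (circle_mean M (W N)) with (riesz_coef n sel psi M N 0 0).
    + rewrite riesz_coef_0, cos_0 by auto; lra.
    + apply circle_mean_ext; intros t; change (IZR 0) with 0.
      rewrite Rmult_0_l, Rplus_0_l, cos_0; unfold W; ring.
Qed.

Lemma circle_mean_riesz_cv M N :
  Un_cv (fun K => sum_f_R0 (fun k => circle_mean M (fun t => term k t * W N t)) K)
        (circle_mean M (fun t => u t * W N t)).
Proof.
  eapply Un_cv_ext; [intros K; symmetry; apply circle_mean_sum|].
  apply circle_mean_cv; intros t.
  eapply Un_cv_ext; [intros K; exact (scal_sum _ K (W N t))|].
  rewrite Rmult_comm; apply CV_mult; [apply Un_cv_const | apply series_cv].
Qed.

Hypothesis coef_tails : small_tails (fun k => Rabs (al k) + Rabs (be k)).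

(* Averaging [u * riesz N] isolates the selected coefficients, up to aliasing of
   frequencies beyond the number of sample points, which the small tails absorb. *)
Theorem riesz_bound N :
  sum_below (fun k => if sel k then al k * cos psi + be k * sin psi else 0) N <= 2 * B.
Proof.
  set (E := sum_below (fun k => if sel k then al k * cos psi + be k * sin psi else 0) N).
  set (y := fun k => if (sel k && (k <? N))%bool then al k * cos psi + be k * sin psi else 0).
  assert (Hy : forall K, (N <= S K)%nat -> sum_f_R0 y K = E).
  { intros K HK; rewrite sum_f_R0_sum_below, (sum_below_stable _ N) by
      (auto; intros j Hj; unfold y; rewrite (proj2 (Nat.ltb_ge j N) Hj), Bool.andb_false_r; reflexivity).
    apply sum_below_ext; intros j Hj; unfold y; rewrite (proj2 (Nat.ltb_lt j N) Hj), Bool.andb_true_r.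
    reflexivity. }
  apply Rle_plus_epsilon; intros eps Heps.
  set (Bw := 2 ^ N); assert (HBw : 0 < Bw) by (apply pow_lt; lra).
  destruct (coef_tails (eps / (2 * Bw))) as [K0 HK0]; [apply Rdiv_lt_0_compat; lra|].
  set (tail := fun k => if (K0 <=? k)%nat then Rabs (al k) + Rabs (be k) else 0) in HK0.
  set (M := (n K0 + 2 * budget n sel N + 1)%nat).
  set (A := fun k => circle_mean M (fun t => term k t * W N t)).
  assert (Hlow : forall p, /2 * E - eps / 2 <= sum_f_R0 A (p + N)).
  { intros p; rewrite <- (Hy (p + N)%nat) by lia.
    apply Rle_trans with (sum_f_R0 (fun k => /2 * y k - Bw * tail k) (p + N)).
    - rewrite minus_sum, !sum_f_R0_scal; specialize (HK0 (p + N)%nat).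
      replace (eps / 2) with (Bw * (eps / (2 * Bw))) by (field; lra); nra.
    - apply sum_Rle; intros k _; apply circle_mean_term_riesz_ge_tail; unfold M; lia. }
  assert (/2 * E - eps / 2 <= B); [|lra].
  apply Rle_trans with (circle_mean M (fun t => u t * W N t));
    [|apply circle_mean_riesz_le; unfold M; lia].
  apply Rle_cv_lim with (fun _ => /2 * E - eps / 2) (fun p => sum_f_R0 A (p + N)); auto.
  - apply Un_cv_const.
  - apply CV_shift', circle_mean_riesz_cv.
Qed.

End RieszBound.

Section GapSequence.

Variables (n : nat -> nat) (lam : R).
Hypothesis gap : hadamard_gap n lam.

Lemma gap_increasing k k' : (k < k')%nat -> (n k < n k')%nat.
Proof.
  destruct gap as [Hl [Hn Hg]].
  assert (Hs : forall k, (n k < n (S k))%nat).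
  { intros j; apply INR_lt; specialize (Hg j); specialize (Hn j).
    apply le_INR in Hn; simpl in Hn; nra. }
  induction 1 as [|k' _ IH]; [apply Hs | specialize (Hs k'); lia].
Qed.

Lemma gap_index_le k : (k <= n k)%nat.
Proof.
  destruct gap as [_ [Hn _]]; induction k as [|k IH]; [lia|].
  pose proof (gap_increasing k (S k) (Nat.lt_succ_diag_r k)); lia.
Qed.

Lemma gap_pow_le a d : lam ^ d * INR (n a) <= INR (n (a + d)%nat).
Proof.
  destruct gap as [Hl [Hn Hg]]; induction d as [|d IH].
  - rewrite Nat.add_0_r; simpl; lra.
  - rewrite Nat.add_succ_r; specialize (Hg (a + d)%nat); simpl; nra.
Qed.

Lemma gap_lam_le k k' : (k < k')%nat -> lam * INR (n k) <= INR (n k').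
Proof.
  intros H; pose proof (gap_pow_le k 1) as H1; rewrite pow_1 in H1.
  apply Rle_trans with (INR (n (k + 1)%nat)); [exact H1|].
  apply le_INR; destruct (Nat.eq_dec (k + 1) k') as [<-|]; [lia|].
  apply Nat.lt_le_incl, gap_increasing; lia.
Qed.

Definition residue_class (q c k : nat) : bool := (k mod q =? c)%nat.

Variables (q c : nat).
Hypothesis q_pos : (1 <= q)%nat.
Let sel := residue_class q c.

Lemma residue_class_spaced k N :
  sel k = true -> sel N = true -> (k < N)%nat -> (k + q <= N)%nat.
Proof.
  unfold sel, residue_class; intros H1 H2 H; apply Nat.eqb_eq in H1, H2.
  pose proof (Nat.div_mod_eq k q); pose proof (Nat.div_mod_eq N q).
  assert (k / q < N / q)%nat by nia; nia.
Qed.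

(* The selected frequencies below [n j] form a lacunary sequence of ratio [lam ^ q]. *)
Lemma residue_budget_le N j :
  (forall k, (k < N)%nat -> sel k = true -> (k + q <= j)%nat) ->
  (lam ^ q - 1) * INR (budget n sel N) <= INR (n j).
Proof.
  assert (Hl : 1 < lam) by apply gap.
  assert (1 <= lam ^ q) by (apply pow_R1_Rle; lra).
  revert j; induction N as [|N IH]; intros j Hj; simpl budget.
  - rewrite Rmult_0_r; apply pos_INR.
  - destruct (sel N) eqn:E.
    + assert (HNj : (N + q <= j)%nat) by (apply Hj; auto).
      assert (IHN : (lam ^ q - 1) * INR (budget n sel N) <= INR (n N)).
      { apply IH; intros k Hk Hs; exact (residue_class_spaced k N Hs E Hk). }
      assert (INR (n (N + q)%nat) <= INR (n j)).
      { apply le_INR; destruct (Nat.eq_dec (N + q) j) as [->|]; [lia|].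
        apply Nat.lt_le_incl, gap_increasing; lia. }
      pose proof (gap_pow_le N q); rewrite plus_INR; nra.
    + rewrite Nat.add_0_r; apply IH; intros k Hk Hs; apply Hj; auto.
Qed.

Lemma residue_budget_le_self N :
  sel N = true -> (lam ^ q - 1) * INR (budget n sel N) <= INR (n N).
Proof.
  intros Hs; apply residue_budget_le; intros k Hk Hk'.
  exact (residue_class_spaced k N Hk' Hs Hk).
Qed.

Hypothesis q_large : lam / (lam - 1) + 2 < lam ^ q.

Lemma residue_budget_dominated N : sel N = true -> (2 * budget n sel N < n N)%nat.
Proof.
  intros Hs; pose proof (residue_budget_le_self N Hs) as Hb.
  destruct gap as [Hl [Hn _]].
  assert (1 < lam / (lam - 1)).
  { apply (Rmult_lt_reg_r (lam - 1)); [lra|]; unfold Rdiv.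
    rewrite Rmult_assoc, Rinv_l; lra. }
  pose proof (pos_INR (budget n sel N)); pose proof (le_INR _ _ (Hn N)).
  apply INR_lt; rewrite mult_INR; simpl (INR 1) in *; simpl (INR 2).
  apply (Rmult_lt_reg_l (lam ^ q - 1)); nra.
Qed.

Lemma residue_budget_separated N k : sel N = true -> k <> N ->
  (Z.of_nat (budget n sel N) < Z.abs (Z.of_nat (n k) - Z.of_nat (n N)))%Z.
Proof.
  intros Hs Hk; pose proof (residue_budget_le_self N Hs) as Hb.
  destruct gap as [Hl [Hn _]].
  set (L := lam ^ q - 1) in *; set (b := INR (budget n sel N)) in *.
  assert (HL : lam < L * (lam - 1)).
  { assert (lam / (lam - 1) * (lam - 1) = lam) by (field; lra); unfold L; nra. }
  assert (Hb0 : 0 <= b) by apply pos_INR.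
  pose proof (le_INR _ _ (Hn N)) as HN; simpl (INR 1) in HN.
  destruct (Nat.lt_total k N) as [Hlt|[|Hgt]]; [| contradiction |].
  - pose proof (gap_lam_le k N Hlt).
    assert (HL0 : 0 < L) by nra.
    assert (lam * (L * b) <= lam * INR (n N)) by (apply Rmult_le_compat_l; lra).
    assert (L * (lam * INR (n k)) <= L * INR (n N)) by (apply Rmult_le_compat_l; lra).
    assert ((lam + L) * INR (n N) < L * lam * INR (n N)) by nra.
    assert (Hsum : b + INR (n k) < INR (n N)) by (apply (Rmult_lt_reg_l (L * lam)); nra).
    unfold b in Hsum; rewrite <- plus_INR in Hsum; apply INR_lt in Hsum; lia.
  - pose proof (gap_lam_le N k Hgt).
    assert ((lam - 1) * (L * b) <= (lam - 1) * INR (n N)) by (apply Rmult_le_compat_l; lra).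
    assert (HLl : 1 < L * (lam - 1)) by lra.
    assert (L * (lam - 1) * (lam * INR (n N)) <= L * (lam - 1) * INR (n k))
      by (apply Rmult_le_compat_l; lra).
    assert (Hm : 0 < (lam - 1) * INR (n N)) by nra.
    assert ((lam - 1) * INR (n N) < L * (lam - 1) * ((lam - 1) * INR (n N))) by nra.
    assert (Hsum : b + INR (n N) < INR (n k))
      by (apply (Rmult_lt_reg_l (L * (lam - 1))); lra).
    unfold b in Hsum; rewrite <- plus_INR in Hsum; apply INR_lt in Hsum; lia.
Qed.

End GapSequence.

Lemma exists_residue_modulus lam :
  1 < lam -> exists q, (1 <= q)%nat /\ lam / (lam - 1) + 2 < lam ^ q.
Proof.
  intros Hl; destruct (Pow_x_infinity lam ltac:(rewrite Rabs_pos_eq; lra) (lam / (lam - 1) + 3))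
    as [q0 Hq0].
  exists (S q0); split; [lia|].
  specialize (Hq0 (S q0) (Nat.le_succ_diag_r q0)).
  rewrite Rabs_pos_eq in Hq0 by (apply pow_le; lra); lra.
Qed.

Lemma sum_geometric_tail x K0 N : x <> 1 ->
  sum_f_R0 (fun k => if (K0 <=? k)%nat then x ^ k else 0) N * (1 - x)
  = if (K0 <=? N)%nat then x ^ K0 - x ^ (S N) else 0.
Proof.
  intros Hx; induction N as [|N IH].
  - simpl; destruct (K0 <=? 0)%nat eqn:E; [|ring].
    apply Nat.leb_le in E; replace K0 with O by lia; simpl; ring.
  - simpl sum_f_R0; rewrite Rmult_plus_distr_r, IH.
    destruct (K0 <=? N)%nat eqn:E1, (K0 <=? S N)%nat eqn:E2.
    + simpl; ring.
    + apply Nat.leb_le in E1; apply Nat.leb_gt in E2; lia.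
    + apply Nat.leb_gt in E1; apply Nat.leb_le in E2; replace K0 with (S N) by lia; simpl; ring.
    + ring.
Qed.

Lemma small_tails_geometric (a : nat -> R) C x :
  0 <= C -> 0 <= x < 1 -> (forall k, a k <= C * x ^ k) -> small_tails a.
Proof.
  intros HC Hx Ha eps Heps.
  set (e := eps / (C + 1)); assert (He : 0 < e) by (apply Rdiv_lt_0_compat; lra).
  destruct (pow_lt_1_zero x ltac:(rewrite Rabs_pos_eq; lra) (e * (1 - x))) as [K0 HK0]; [nra|].
  exists K0; intros N.
  specialize (HK0 K0 (Nat.le_refl K0)); rewrite Rabs_pos_eq in HK0 by (apply pow_le; lra).
  set (T := sum_f_R0 (fun k => if (K0 <=? k)%nat then x ^ k else 0) N).
  assert (HT0 : 0 <= T).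
  { apply cond_pos_sum; intros k; destruct (K0 <=? k)%nat; [apply pow_le|]; lra. }
  assert (HT : T < e).
  { apply (Rmult_lt_reg_r (1 - x)); [lra|]; unfold T; rewrite sum_geometric_tail by lra.
    pose proof (pow_le x (S N) ltac:(lra)); destruct (K0 <=? N)%nat; nra. }
  apply Rle_trans with (C * T).
  - unfold T; rewrite <- sum_f_R0_scal; apply sum_Rle; intros k _.
    destruct (K0 <=? k)%nat; [apply Ha | lra].
  - replace eps with ((C + 1) * e) by (unfold e; field; lra); nra.
Qed.

Lemma Un_cv_sum_terms_bounded (a : nat -> R) l :
  Un_cv (fun N => sum_f_R0 a N) l -> exists B, forall k, Rabs (a k) <= B.
Proof.
  intros H; destruct (maj_by_pos _ (exist _ l H)) as [B [_ HB]].
  exists (2 * B); intros [|k].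
  - specialize (HB O); simpl in HB; pose proof (Rabs_pos (a O)); lra.
  - replace (a (S k)) with (sum_f_R0 a (S k) - sum_f_R0 a k) by (simpl; ring).
    unfold Rminus; eapply Rle_trans; [apply Rabs_triang|]; rewrite Rabs_Ropp.
    pose proof (HB (S k)); pose proof (HB k); lra.
Qed.

Lemma Rabs_Cmul_le c p :
  Rabs (fst (Cmul c p)) + Rabs (snd (Cmul c p)) <= 2 * (Rabs (fst c) + Rabs (snd c)) * Cmod p.
Proof.
  pose proof (Rabs_fst_le_Cmod p); pose proof (Rabs_snd_le_Cmod p).
  destruct c as [c1 c2], p as [p1 p2]; unfold Cmul; simpl in *.
  pose proof (Rabs_pos c1); pose proof (Rabs_pos c2); pose proof (Rabs_pos p1); pose proof (Rabs_pos p2).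
  assert (Rabs (c1 * p1 - c2 * p2) <= Rabs c1 * Rabs p1 + Rabs c2 * Rabs p2).
  { unfold Rminus; rewrite <- !Rabs_mult, <- (Rabs_Ropp (c2 * p2)); apply Rabs_triang. }
  assert (Rabs (c1 * p2 + c2 * p1) <= Rabs c1 * Rabs p2 + Rabs c2 * Rabs p1).
  { rewrite <- !Rabs_mult; apply Rabs_triang. }
  nra.
Qed.

Lemma pow_le_pow_le1 x k m : 0 <= x <= 1 -> (k <= m)%nat -> x ^ m <= x ^ k.
Proof.
  intros Hx H; induction H as [|m _ IH]; [lra|]; simpl.
  pose proof (pow_le x m ltac:(lra)); nra.
Qed.

Lemma gap_coef_bounded (c : nat -> Cpx) (n : nat -> nat) rho a b :
  Un_cv (fun N => fst (gap_partial c n (rho, 0) N)) a ->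
  Un_cv (fun N => snd (gap_partial c n (rho, 0) N)) b ->
  exists B, forall k, (Rabs (fst (c k)) + Rabs (snd (c k))) * Rabs (rho ^ n k) <= B.
Proof.
  intros Ha Hb.
  assert (Hterm : forall k, Cmul (c k) (Cpow (rho, 0) (n k)) = (fst (c k) * rho ^ n k, snd (c k) * rho ^ n k)).
  { intros k; rewrite Cpow_real; destruct (c k); unfold Cmul; simpl; f_equal; ring. }
  unfold gap_partial in Ha, Hb; cbn [fst snd] in Ha, Hb.
  destruct (Un_cv_sum_terms_bounded _ _ Ha) as [B1 HB1].
  destruct (Un_cv_sum_terms_bounded _ _ Hb) as [B2 HB2].
  exists (B1 + B2); intros k.
  specialize (HB1 k); specialize (HB2 k); rewrite Hterm in HB1, HB2; cbn [fst snd] in HB1, HB2.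
  rewrite Rabs_mult in HB1, HB2.
  lra.
Qed.

Lemma gap_terms_small_tails (c : nat -> Cpx) (n : nat -> nat) lam z rho B :
  hadamard_gap n lam -> Cmod z < rho ->
  (forall k, (Rabs (fst (c k)) + Rabs (snd (c k))) * Rabs (rho ^ n k) <= B) ->
  small_tails (fun k => Rabs (fst (Cmul (c k) (Cpow z (n k))))
                        + Rabs (snd (Cmul (c k) (Cpow z (n k))))).
Proof.
  intros Hg Hz HB; pose proof (Cmod_ge0 z) as Hr.
  set (x := Cmod z / rho).
  assert (Hx : 0 <= x < 1).
  { unfold x; split; [apply Rmult_le_pos; [lra | apply Rlt_le, Rinv_0_lt_compat; lra]|].
    apply (Rmult_lt_reg_r rho); [lra|]; unfold Rdiv; rewrite Rmult_assoc, Rinv_l; lra. }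
  assert (HB0 : 0 <= B).
  { specialize (HB O); pose proof (Rabs_pos (fst (c O))); pose proof (Rabs_pos (snd (c O))).
    pose proof (Rabs_pos (rho ^ n O)); nra. }
  apply (small_tails_geometric _ (2 * B) x); [lra | exact Hx|]; intros k.
  eapply Rle_trans; [apply Rabs_Cmul_le|]; rewrite Cmod_Cpow.
  replace (Cmod z) with (x * rho) by (unfold x; field; lra).
  rewrite Rpow_mult_distr, <- (Rabs_pos_eq (rho ^ n k)) by (apply pow_le; lra).
  pose proof (pow_le_pow_le1 x k (n k) ltac:(lra) (gap_index_le n lam Hg k)).
  pose proof (pow_le x (n k) ltac:(lra)); specialize (HB k).
  pose proof (Rabs_pos (fst (c k))); pose proof (Rabs_pos (snd (c k))).
  pose proof (Rabs_pos (rho ^ n k)); nra.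
Qed.

Lemma gap_series_small_tails (lam : R) (n : nat -> nat) (c : nat -> Cpx)
    (U V : Cpx -> R) z :
  hadamard_gap n lam ->
  (forall w, in_disc w ->
     Un_cv (fun N => fst (gap_partial c n w N)) (U w) /\
     Un_cv (fun N => snd (gap_partial c n w N)) (V w)) ->
  in_disc z ->
  small_tails (fun k => Rabs (fst (Cmul (c k) (Cpow z (n k))))
                        + Rabs (snd (Cmul (c k) (Cpow z (n k))))).
Proof.
  intros Hg Hcv Hz; unfold in_disc in Hz; pose proof (Cmod_ge0 z).
  set (rho := (1 + Cmod z) / 2).
  assert (Hrho : in_disc (rho, 0)).
  { unfold in_disc, Cmod; simpl; rewrite Rmult_0_l, Rplus_0_r, sqrt_square; unfold rho; lra. }
  destruct (Hcv _ Hrho) as [H1 H2].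
  destruct (gap_coef_bounded c n rho _ _ H1 H2) as [C HC].
  apply (gap_terms_small_tails c n lam z rho C Hg); [unfold rho; lra | exact HC].
Qed.

Lemma sum_below_indicator m a Q :
  sum_below (fun j => if (m =? j)%nat then a else 0) Q = if (m <? Q)%nat then a else 0.
Proof.
  induction Q as [|Q IH]; simpl sum_below; [destruct m; simpl; ring|]; rewrite IH.
  destruct (Nat.eq_dec m Q) as [->|Hne].
  - rewrite Nat.eqb_refl, Nat.ltb_irrefl, (proj2 (Nat.ltb_lt Q (S Q))) by lia; ring.
  - rewrite (proj2 (Nat.eqb_neq m Q) Hne).
    destruct (m <? Q)%nat eqn:E1, (m <? S Q)%nat eqn:E2; try ring;
      apply Nat.ltb_lt in E1 || apply Nat.ltb_ge in E1;
      apply Nat.ltb_lt in E2 || apply Nat.ltb_ge in E2; lia.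
Qed.

Lemma sum_below_residue_classes q (f : nat -> R) N : (1 <= q)%nat ->
  sum_below (fun cl => sum_below (fun k => if residue_class q cl k then f k else 0) N) q
  = sum_below f N.
Proof.
  intros Hq; induction N as [|N IH]; simpl sum_below.
  - rewrite sum_below_const; ring.
  - rewrite sum_below_plus, IH; f_equal.
    unfold residue_class; rewrite sum_below_indicator, (proj2 (Nat.ltb_lt _ _)); [reflexivity|].
    apply Nat.mod_upper_bound; lia.
Qed.

Lemma gap_series_direction_bound (lam : R) (n : nat -> nat) (c : nat -> Cpx)
    (U V : Cpx -> R) q z B psi :
  hadamard_gap n lam -> (1 <= q)%nat -> lam / (lam - 1) + 2 < lam ^ q ->
  (forall w, in_disc w ->
     Un_cv (fun N => fst (gap_partial c n w N)) (U w) /\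
     Un_cv (fun N => snd (gap_partial c n w N)) (V w)) ->
  in_disc z -> (forall t, U (Cmul z (expi t)) <= B) ->
  cos psi * U z + sin psi * V z <= INR q * (2 * B).
Proof.
  intros Hg Hq HQ Hcv Hz HB.
  pose proof Hg as [_ [Hn _]].
  set (al := fun k => fst (Cmul (c k) (Cpow z (n k)))).
  set (be := fun k => snd (Cmul (c k) (Cpow z (n k)))).
  set (y := fun k => al k * cos psi + be k * sin psi).
  assert (Htails : small_tails (fun k => Rabs (al k) + Rabs (be k)))
    by exact (gap_series_small_tails lam n c U V z Hg Hcv Hz).
  assert (Hclass : forall cl N, sum_below (fun k => if residue_class q cl k then y k else 0) N <= 2 * B).
  { intros cl N; apply (riesz_bound n _ psi al be Hn (gap_increasing n lam Hg)
      (residue_budget_dominated n lam Hg q cl Hq HQ) (residue_budget_separated n lam Hg q cl Hq HQ)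
      (fun t => U (Cmul z (expi t))) B); auto.
    intros t.
    assert (Hw : in_disc (Cmul z (expi t)))
      by (unfold in_disc; rewrite Cmod_Cmul, Cmod_expi, Rmult_1_r; exact Hz).
    destruct (Hcv _ Hw) as [Hu _]; eapply Un_cv_ext; [|exact Hu]; intros K.
    unfold gap_partial; cbn [fst]; apply sum_eq; intros k _.
    rewrite fst_Cmul_Cpow_rotate; reflexivity. }
  assert (Hsum : forall N, sum_f_R0 y N <= INR q * (2 * B)).
  { intros N; rewrite sum_f_R0_sum_below, <- (sum_below_residue_classes q) by exact Hq.
    rewrite <- sum_below_const; apply sum_below_le; intros; apply Hclass. }
  destruct (Hcv z Hz) as [Hu Hv].
  apply Rle_cv_lim with (fun N => sum_f_R0 y N) (fun _ => INR q * (2 * B));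
    [exact Hsum | | apply Un_cv_const].
  apply Un_cv_ext with (fun N => cos psi * sum_f_R0 al N + sin psi * sum_f_R0 be N).
  - intros N; rewrite <- !sum_f_R0_scal, <- sum_plus; apply sum_eq; intros; unfold y; ring.
  - apply CV_plus; apply CV_mult; auto using Un_cv_const.
Qed.

Theorem corollary4 (v : R -> R) (lam : R) (n : nat -> nat) (c : nat -> Cpx)
  (U V : Cpx -> R) :
  weight v -> doubling v -> hadamard_gap n lam ->
  (forall z, in_disc z ->
     Un_cv (fun N => fst (gap_partial c n z N)) (U z) /\
     Un_cv (fun N => snd (gap_partial c n z N)) (V z)) ->
  in_k_v v U ->
  in_h_v v U /\ in_h_v v V.
Proof.
  intros _ _ Hg Hcv [K [HK HU]].
  destruct (exists_residue_modulus lam (proj1 Hg)) as [q [Hq HQ]].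
  assert (Hdir : forall z psi, in_disc z ->
            cos psi * U z + sin psi * V z <= INR q * (2 * K) * v (Cmod z)).
  { intros z psi Hz; rewrite Rmult_assoc, (Rmult_assoc 2).
    apply (gap_series_direction_bound lam n c U V q z); auto; intros t.
    rewrite <- (Rmult_1_r (Cmod z)), <- (Cmod_expi t), <- Cmod_Cmul; apply HU.
    unfold in_disc; rewrite Cmod_Cmul, Cmod_expi, Rmult_1_r; exact Hz. }
  assert (HqK : 0 < INR q * (2 * K)) by (pose proof (le_INR 1 q Hq); simpl in *; nra).
  split; exists (INR q * (2 * K)); split; auto; intros z Hz; apply Rabs_le; split.
  - pose proof (Hdir z PI Hz); rewrite cos_PI, sin_PI in *; lra.
  - pose proof (Hdir z 0 Hz); rewrite cos_0, sin_0 in *; lra.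
  - pose proof (Hdir z (- (PI / 2)) Hz); rewrite cos_neg, sin_neg, cos_PI2, sin_PI2 in *; lra.
  - pose proof (Hdir z (PI / 2) Hz); rewrite cos_PI2, sin_PI2 in *; lra.
Qed.
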